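(* Let $X$ and $Y$ be quasi-isometric semimetric spaces. If $X$ is quasi-metric, then $Y$ is quasi-metric.
   Context: A semimetric space is a set $X$ with $d:X\times X\to\mathbb{R}^{\ge0}\cup\{\infty\}$ such that $d(x,y)=0$ iff $x=y$ and $d(x,z)\le d(x,y)+d(y,z)$ (no symmetry; $\infty$ absorbs addition and multiplication by positive reals). It is strongly connected if $d(x,y)<\infty$ for all $x,y$, and quasi-metric if it is strongly connected and there exist $1\le\lambda<\infty$, $0\le\epsilon<\infty$ with $d(y,x)\le\lambda d(x,y)+\epsilon$ for all $x,y$. A map $f:X\to X'$ is a quasi-isometry if there are $1\le\lambda<\infty$, $0<\epsilon<\infty$, $0\le\mu<\infty$ with $\frac1\lambda d(x,y)-\epsilon\le d'(f(x),f(y))\le\lambda d(x,y)+\epsilon$ for all $x,y$, and for every $x'\in X'$ some $x\in X$ with $\max(d'(x',f(x)),d'(f(x),x'))\le\mu$; $X$ and $X'$ are quasi-isometric if such a map exists. *)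

(* concrete reals R. Extended nonnegative reals [0,oo] are
   modelled as [option R]: [Some r] is the finite value r (required >= 0),
   [None] is +oo. *)
From Stdlib Require Import Reals.
Open Scope R_scope.

Set Implicit Arguments.
Definition ER := option R.

Definition eadd (a b : ER) : ER :=
  match a, b with Some x, Some y => Some (x + y) | _, _ => None end.

Definition escale (l : R) (a : ER) : ER :=
  match a with Some x => Some (l * x) | None => None end.

Definition ele (a b : ER) : Prop :=
  match a, b with
  | _, None => True
  | None, Some _ => False
  | Some x, Some y => x <= y
  end.

Definition efinite (a : ER) : Prop := a <> None.

Record semimetric (X : Type) (d : X -> X -> ER) : Prop := {
  sm_nonneg : forall x y r, d x y = Some r -> 0 <= r;
  sm_zero : forall x y, d x y = Some 0 <-> x = y;
  sm_triangle : forall x y z, ele (d x z) (eadd (d x y) (d y z))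
}.

Definition strongly_connected (X : Type) (d : X -> X -> ER) : Prop :=
  forall x y, efinite (d x y).

Definition quasi_metric (X : Type) (d : X -> X -> ER) : Prop :=
  strongly_connected d /\
  exists lam eps : R, 1 <= lam /\ 0 <= eps /\
    forall x y, ele (d y x) (eadd (escale lam (d x y)) (Some eps)).

(* (1/lam) d(x,y) - eps <= d'(f x, f y), written as
   (1/lam) d(x,y) <= d'(f x, f y) + eps to avoid oo - eps. *)
Definition quasi_isometry (X Y : Type) (d : X -> X -> ER) (d' : Y -> Y -> ER)
  (f : X -> Y) : Prop :=
  exists lam eps mu : R, 1 <= lam /\ 0 < eps /\ 0 <= mu /\
    (forall x y,
        ele (escale (/ lam) (d x y)) (eadd (d' (f x) (f y)) (Some eps)) /\
        ele (d' (f x) (f y)) (eadd (escale lam (d x y)) (Some eps))) /\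
    (forall y : Y, exists x : X,
        ele (d' y (f x)) (Some mu) /\ ele (d' (f x) y) (Some mu)).

Definition quasi_isometric (X Y : Type) (d : X -> X -> ER) (d' : Y -> Y -> ER)
  : Prop := exists f : X -> Y, quasi_isometry d d' f.

(* Once Y is shown to be strongly connected, all distances are finite reals.
   Coarse surjectivity moves y1, y2 to within mu of points f x1, f x2; the
   quasi-isometry compares d(f x2, f x1) with d(x2, x1), quasi-symmetry of X
   compares that with d(x1, x2), and the quasi-isometry brings us back to
   d(f x1, f x2), which is within 2 mu + d(y1, y2) by the triangle inequality. *)
From Stdlib Require Import Reals Lra Psatz.
Open Scope R_scope.

(* [efin oo] is the junk value [0]; it is only used on finite arguments. *)
Definition efin (a : ER) : R := match a with Some r => r | None => 0 end.

Lemma efin_finite {a : ER} : efinite a -> a = Some (efin a).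
Proof. destruct a as [r|]; [reflexivity | now intros []]. Qed.

Lemma ele_finite (a b : ER) : ele a b -> efinite b -> efinite a.
Proof. destruct a, b; simpl; easy. Qed.

Lemma eadd_finite (a b : ER) : efinite a -> efinite b -> efinite (eadd a b).
Proof. destruct a, b; simpl; easy. Qed.

Section StronglyConnected.

Context {X : Type} {d : X -> X -> ER}.
Hypotheses (Sd : semimetric d) (SCd : strongly_connected d).

Lemma efin_triangle (x y z : X) : efin (d x z) <= efin (d x y) + efin (d y z).
Proof.
  pose proof (sm_triangle Sd x y z) as H.
  rewrite (efin_finite (SCd x z)), (efin_finite (SCd x y)), (efin_finite (SCd y z)) in H.
  exact H.
Qed.

Lemma quasi_metricP :
  quasi_metric d <->
  exists lam eps : R, 1 <= lam /\ 0 <= eps /\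
    forall x y, efin (d y x) <= lam * efin (d x y) + eps.
Proof.
  split.
  - intros [_ [lam [eps [Hlam [Heps Hsym]]]]].
    exists lam, eps; repeat split; try assumption.
    intros x y.
    pose proof (Hsym x y) as H.
    rewrite (efin_finite (SCd x y)), (efin_finite (SCd y x)) in H.
    exact H.
  - intros [lam [eps [Hlam [Heps Hsym]]]].
    split; [exact SCd|].
    exists lam, eps; repeat split; try assumption.
    intros x y.
    rewrite (efin_finite (SCd y x)), (efin_finite (SCd x y)).
    apply Hsym.
Qed.

End StronglyConnected.

Section QuasiIsometry.

Context {X Y : Type} {dX : X -> X -> ER} {dY : Y -> Y -> ER} {f : X -> Y}.
Hypotheses (SY : semimetric dY) (Hf : quasi_isometry dX dY f)
  (SCX : strongly_connected dX).

Lemma quasi_isometry_strongly_connected : strongly_connected dY.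
Proof.
  destruct Hf as [L [e [mu [_ [_ [_ [Hqi Hsurj]]]]]]].
  intros y1 y2.
  destruct (Hsurj y1) as [x1 [Hy1 _]], (Hsurj y2) as [x2 [_ Hy2]].
  assert (Hfx : efinite (dY (f x1) (f x2))).
  { apply ele_finite with (1 := proj2 (Hqi x1 x2)).
    rewrite (efin_finite (SCX x1 x2)); easy. }
  assert (Hfx1y2 : efinite (dY (f x1) y2)).
  { apply ele_finite with (1 := sm_triangle SY (f x1) (f x2) y2).
    apply eadd_finite; [exact Hfx | now apply ele_finite with (1 := Hy2)]. }
  apply ele_finite with (1 := sm_triangle SY y1 (f x1) y2).
  apply eadd_finite; [now apply ele_finite with (1 := Hy1) | exact Hfx1y2].
Qed.

Lemma quasi_isometry_efin :
  exists L e mu : R, 1 <= L /\ 0 <= e /\ 0 <= mu /\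
    (forall x y, efin (dX x y) <= L * (efin (dY (f x) (f y)) + e)) /\
    (forall x y, efin (dY (f x) (f y)) <= L * efin (dX x y) + e) /\
    (forall y, exists x, efin (dY y (f x)) <= mu /\ efin (dY (f x) y) <= mu).
Proof.
  pose proof quasi_isometry_strongly_connected as SCY.
  destruct Hf as [L [e [mu [HL [He [Hmu [Hqi Hsurj]]]]]]].
  exists L, e, mu; repeat split; try lra.
  - intros x y.
    destruct (Hqi x y) as [Hlow _].
    rewrite (efin_finite (SCX x y)), (efin_finite (SCY (f x) (f y))) in Hlow.
    simpl in Hlow.
    replace (efin (dX x y)) with (L * (/ L * efin (dX x y))) by (field; lra).
    apply Rmult_le_compat_l; lra.
  - intros x y.
    destruct (Hqi x y) as [_ Hup].
    rewrite (efin_finite (SCX x y)), (efin_finite (SCY (f x) (f y))) in Hup.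
    exact Hup.
  - intros y.
    destruct (Hsurj y) as [x [Hyx Hxy]].
    exists x.
    rewrite (efin_finite (SCY y (f x))) in Hyx.
    rewrite (efin_finite (SCY (f x) y)) in Hxy.
    split; assumption.
Qed.

End QuasiIsometry.

Section CoarseSymmetry.

Context {X Y : Type} {DX : X -> X -> R} {DY : Y -> Y -> R} {f : X -> Y}.
Variables (L e mu a b : R).
Hypotheses (HL : 0 <= L) (Ha : 0 <= a).
Hypothesis DY_triangle : forall x y z, DY x z <= DY x y + DY y z.
Hypothesis Hlow : forall x y, DX x y <= L * (DY (f x) (f y) + e).
Hypothesis Hup : forall x y, DY (f x) (f y) <= L * DX x y + e.
Hypothesis Hsym : forall x y, DX y x <= a * DX x y + b.

Lemma coarse_reverse_bound (x1 x2 : X) (y1 y2 : Y) :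
  DY y1 (f x1) <= mu -> DY (f x1) y1 <= mu ->
  DY y2 (f x2) <= mu -> DY (f x2) y2 <= mu ->
  DY y2 y1 <= L * L * a * DY y1 y2
              + (2 * mu + e + L * L * a * (2 * mu + e) + L * b).
Proof.
  intros H1 H1' H2 H2'.
  assert (Hback : DY y2 y1 <= 2 * mu + DY (f x2) (f x1)).
  { pose proof (DY_triangle y2 (f x2) y1).
    pose proof (DY_triangle (f x2) (f x1) y1). lra. }
  assert (Hforth : DY (f x1) (f x2) <= 2 * mu + DY y1 y2).
  { pose proof (DY_triangle (f x1) y1 (f x2)).
    pose proof (DY_triangle y1 y2 (f x2)). lra. }
  assert (HX : DX x1 x2 <= L * (DY y1 y2 + 2 * mu + e)).
  { pose proof (Hlow x1 x2). nra. }
  assert (HX' : DX x2 x1 <= a * (L * (DY y1 y2 + 2 * mu + e)) + b).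
  { pose proof (Hsym x1 x2).
    pose proof (Rmult_le_compat_l a _ _ ltac:(lra) HX). lra. }
  pose proof (Hup x2 x1).
  pose proof (Rmult_le_compat_l L _ _ ltac:(lra) HX').
  nra.
Qed.

End CoarseSymmetry.

Theorem corollary2p11 (X Y : Type) (dX : X -> X -> ER) (dY : Y -> Y -> ER) :
  semimetric dX -> semimetric dY ->
  quasi_isometric dX dY ->
  quasi_metric dX -> quasi_metric dY.
Proof.
  intros SX SY [f Hf] HX.
  pose proof (proj1 HX) as SCX.
  pose proof (quasi_isometry_strongly_connected SY Hf SCX) as SCY.
  apply (proj1 (quasi_metricP SCX)) in HX as [a [b [Ha [Hb Hsym]]]].
  destruct (quasi_isometry_efin SY Hf SCX)
    as [L [e [mu [HL [He [Hmu [Hlow [Hup Hsurj]]]]]]]].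
  apply (quasi_metricP SCY).
  exists (L * L * a), (2 * mu + e + L * L * a * (2 * mu + e) + L * b).
  assert (HLL : 1 <= L * L) by nra.
  assert (HLLa : 1 <= L * L * a) by nra.
  split; [lra | split; [nra |]].
  intros y1 y2.
  destruct (Hsurj y1) as [x1 [H1 H1']], (Hsurj y2) as [x2 [H2 H2']].
  eapply (coarse_reverse_bound (DX := fun x x' => efin (dX x x'))
                              (DY := fun y y' => efin (dY y y')));
    eauto using efin_triangle; lra.
Qed.
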